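(* Let $M_0>0$, $\varphi\in\mathrm{Lip}_\alpha$, $\tau_0\in C_+(\Omega)$ with $\|\varphi\|_{\mathrm{Lip}_\alpha}+\|\tau_0\|_\infty\le M_0$, and let $r\in(0,+\infty)$. Then system (1.1) with initial distribution $(\varphi,\tau_0)$ admits at most one solution $(A,\tau)\in C((-\infty,r],C(\Omega))\times C([0,r],C(\Omega))$ on $[0,r]$.
   Context: $\Omega\subset\mathbb R^n$ compact, $C(\Omega)$ with sup norm, $C_+(\Omega)$ nonnegative functions, $\alpha\ge0$ fixed. Standing assumption: $F:C(\Omega)\times C(\Omega)\times C(\Omega^2)\to C(\Omega)$ is Lipschitz on bounded sets (for every $M>0$ there is $L(M)$ with $\|F(u,v,w)-F(\hat u,\hat v,\hat w)\|_\infty\le L(M)[\|u-\hat u\|_\infty+\|v-\hat v\|_\infty+\|w-\hat w\|_\infty]$ when all arguments have norm $\le M$); $f:C(\Omega)\to C(\Omega)$ is Lipschitz, $0<f(\phi)(x)\le M_f$ for a constant $M_f$, and non-increasing for the pointwise order. $\mathrm{Lip}_\alpha$: $\phi\in C((-\infty,0],C(\Omega))$ with $\theta\mapsto e^{-\alpha|\theta|}\phi(\theta)$ bounded and Lipschitz, norm = sup norm + Lipschitz seminorm of that map. A solution of (1.1) on $[0,r]$ with initial distribution $(\varphi,\tau_0)$: continuous $A:(-\infty,r]\to C(\Omega)$, $\tau:[0,r]\to C_+(\Omega)$ with $A=\varphi$ on $(-\infty,0]$, $A(t,x)=\varphi(0,x)+\int_0^tF(A(l,\cdot),\tau(l,\cdot),A(l-\tau(l)))(x)dl$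 for $t\in[0,r]$, where $A(l-\tau(l))\in C(\Omega^2)$ is $(x,y)\mapsto A(l-\tau(l,x),y)$, and $\int_{t-\tau(t,x)}^tf(A(s,\cdot))(x)ds=\int_{-\tau_0(x)}^0f(\varphi(s,\cdot))(x)ds$ for $t\in[0,r]$, $x\in\Omega$. *)

From Stdlib Require Fin.
From Stdlib Require Export Reals Lra.
Open Scope R_scope.

Definition pt (n : nat) := Fin.t n -> R.

Definition subset (n : nat) := pt n -> Prop.

Definition pt_cv {n : nat} (u : nat -> pt n) (l : pt n) : Prop :=
  forall i : Fin.t n, Un_cv (fun k => u k i) (l i).

(* Compact subset of R^n (sequential compactness, equivalent to compactness
   in R^n): every sequence in Omega has a subsequence converging in Omega. *)
Definition compact_set {n : nat} (Omega : subset n) : Prop :=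
  forall u : nat -> pt n, (forall k, Omega (u k)) ->
  exists (phi : nat -> nat) (l : pt n),
    (forall k, (phi k < phi (S k))%nat) /\ Omega l /\ pt_cv (fun k => u (phi k)) l.

(* Distance check in R^n (max-norm ball; induces the usual topology). *)
Definition close {n : nat} (x y : pt n) (d : R) : Prop :=
  forall i : Fin.t n, Rabs (x i - y i) < d.

(* u belongs to C(Omega): continuous on Omega (values off Omega are irrelevant). *)
Definition Cfun {n : nat} (Omega : subset n) (u : pt n -> R) : Prop :=
  forall x, Omega x -> forall eps, 0 < eps -> exists delta, 0 < delta /\
    forall y, Omega y -> close x y delta -> Rabs (u y - u x) < eps.

Definition Cfun2 {n : nat} (Omega : subset n) (w : pt n -> pt n -> R) : Prop :=
  forall x y, Omega x -> Omega y -> forall eps, 0 < eps -> exists delta, 0 < delta /\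
    forall x' y', Omega x' -> Omega y' -> close x x' delta -> close y y' delta ->
      Rabs (w x' y' - w x y) < eps.

Definition Cplus {n : nat} (Omega : subset n) (u : pt n -> R) : Prop :=
  Cfun Omega u /\ forall x, Omega x -> 0 <= u x.

Definition nle {n : nat} (Omega : subset n) (u : pt n -> R) (a : R) : Prop :=
  forall x, Omega x -> Rabs (u x) <= a.

Definition nle2 {n : nat} (Omega : subset n) (w : pt n -> pt n -> R) (a : R) : Prop :=
  forall x y, Omega x -> Omega y -> Rabs (w x y) <= a.

Definition fsub {n : nat} (u v : pt n -> R) : pt n -> R := fun x => u x - v x.
Definition fsub2 {n : nat} (u v : pt n -> pt n -> R) : pt n -> pt n -> R :=
  fun x y => u x y - v x y.

Definition Fop (n : nat) :=
  (pt n -> R) -> (pt n -> R) -> (pt n -> pt n -> R) -> (pt n -> R).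

(* Standing assumption on F: maps C x C x C(Omega^2) into C(Omega) and is
   Lipschitz on bounded sets (norm inequalities written via upper bounds,
   i.e. ||.|| <= a  for the sup norm). *)
Definition F_assumption {n : nat} (Omega : subset n) (F : Fop n) : Prop :=
  (forall u v w, Cfun Omega u -> Cfun Omega v -> Cfun2 Omega w -> Cfun Omega (F u v w)) /\
  (forall M, 0 < M -> exists L, forall u v w u' v' w',
     Cfun Omega u -> Cfun Omega v -> Cfun2 Omega w ->
     Cfun Omega u' -> Cfun Omega v' -> Cfun2 Omega w' ->
     nle Omega u M -> nle Omega v M -> nle2 Omega w M ->
     nle Omega u' M -> nle Omega v' M -> nle2 Omega w' M ->
     forall a b c, nle Omega (fsub u u') a -> nle Omega (fsub v v') b ->
       nle2 Omega (fsub2 w w') c ->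
       nle Omega (fsub (F u v w) (F u' v' w')) (L * (a + b + c))).

Definition f_assumption {n : nat} (Omega : subset n)
    (f : (pt n -> R) -> (pt n -> R)) (Mf : R) : Prop :=
  (forall u, Cfun Omega u -> Cfun Omega (f u)) /\
  (exists L, forall u u', Cfun Omega u -> Cfun Omega u' ->
     forall a, nle Omega (fsub u u') a -> nle Omega (fsub (f u) (f u')) (L * a)) /\
  (forall u, Cfun Omega u -> forall x, Omega x -> 0 < f u x <= Mf) /\
  (forall u v, Cfun Omega u -> Cfun Omega v -> (forall x, Omega x -> u x <= v x) ->
     forall x, Omega x -> f v x <= f u x).

Definition Ccurve {n : nat} (Omega : subset n) (I : R -> Prop) (A : R -> pt n -> R) : Prop :=
  (forall t, I t -> Cfun Omega (A t)) /\
  (forall t, I t -> forall eps, 0 < eps -> exists delta, 0 < delta /\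
     forall s, I s -> Rabs (s - t) < delta -> nle Omega (fsub (A s) (A t)) eps).

(* phi in Lip_alpha with  ||phi||_{Lip_alpha} <= a + b, where a bounds the sup
   norm and b the Lipschitz seminorm of theta |-> e^{-alpha|theta|} phi(theta). *)
Definition Lip_alpha_bounds {n : nat} (Omega : subset n) (alpha : R)
    (phi : R -> pt n -> R) (a b : R) : Prop :=
  Ccurve Omega (fun th => th <= 0) phi /\
  (forall th, th <= 0 -> nle Omega (fun x => exp (- alpha * Rabs th) * phi th x) a) /\
  (forall th1 th2, th1 <= 0 -> th2 <= 0 ->
     nle Omega (fun x => exp (- alpha * Rabs th1) * phi th1 x
                        - exp (- alpha * Rabs th2) * phi th2 x) (b * Rabs (th1 - th2))).

Definition is_solution {n : nat} (Omega : subset n) (F : Fop n)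
    (f : (pt n -> R) -> (pt n -> R)) (phi : R -> pt n -> R) (tau0 : pt n -> R)
    (r : R) (A tau : R -> pt n -> R) : Prop :=
  Ccurve Omega (fun t => t <= r) A /\
  Ccurve Omega (fun t => 0 <= t <= r) tau /\
  (forall t, 0 <= t <= r -> Cplus Omega (tau t)) /\
  (forall t, t <= 0 -> forall x, Omega x -> A t x = phi t x) /\
  (forall t, 0 <= t <= r -> forall x, Omega x ->
     exists pr : Riemann_integrable
        (fun l => F (A l) (tau l) (fun x' y => A (l - tau l x') y) x) 0 t,
       A t x = phi 0 x + RiemannInt pr) /\
  (forall t, 0 <= t <= r -> forall x, Omega x ->
     exists (pr1 : Riemann_integrable (fun s => f (A s) x) (t - tau t x) t)
            (pr2 : Riemann_integrable (fun s => f (phi s) x) (- tau0 x) 0),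
       RiemannInt pr1 = RiemannInt pr2).

From Stdlib Require Import Reals Lra Lia Classical ClassicalEpsilon.
Open Scope R_scope.

(* Both solutions stay bounded, and their delays stay in some [0, K], on the
   compact time interval.  Hence the right-hand side of the equation for A is
   bounded along a solution, so A is Lipschitz in time on [-K, r] (the history
   being Lipschitz there since it lies in Lip_alpha).  Suppose the solutions
   agree before time T.  On [T, T + h] the integral equation bounds the gap in
   A by L (3 + Lam) h times the largest gap D in A and tau, the delayed
   arguments being compared through the Lipschitz bound Lam.  The threshold
   condition equates the integrals of f(A_i) over [t - tau_i, t]; since f is
   bounded below by some m > 0 on bounded arguments, the gap in tau is at most
   Lf h D / m.  For h small both gaps are at most D / 2, hence zero, and a
   continuity induction on [0, r] concludes. *)

Lemma Rabs_le_inv (x c : R) : Rabs x <= c -> - c <= x <= c.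
Proof. unfold Rabs; destruct (Rcase_abs x); lra. Qed.

Lemma exp_le_compat (x y : R) : x <= y -> exp x <= exp y.
Proof.
  intro H. destruct (Rle_lt_or_eq_dec _ _ H) as [Hlt | <-].
  - left; apply exp_increasing; auto.
  - right; reflexivity.
Qed.

Lemma exp_lipschitz_le (u v c : R) :
  u <= c -> v <= c -> Rabs (exp u - exp v) <= exp c * Rabs (u - v).
Proof.
  assert (Hle : forall x y, y <= x -> x <= c -> Rabs (exp x - exp y) <= exp c * Rabs (x - y)).
  { intros x y Hyx Hxc.
    assert (Hy : exp y = exp x * exp (y - x)) by (rewrite <- exp_plus; f_equal; ring).
    pose proof (exp_ineq1_le (y - x)). pose proof (exp_pos x).
    pose proof (exp_le_compat _ _ Hxc). pose proof (exp_le_compat _ _ Hyx).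
    rewrite !Rabs_right by lra. rewrite Hy. nra. }
  intros Hu Hv. destruct (Rle_or_lt v u); [auto|].
  rewrite Rabs_minus_sym, (Rabs_minus_sym u v). apply Hle; lra.
Qed.

Lemma real_interval_ind (a b : R) (Q : R -> Prop) : a <= b ->
  (forall T, a <= T <= b -> (forall s, a <= s < T -> Q s) ->
     exists d, 0 < d /\ forall s, a <= s <= b -> T <= s < T + d -> Q s) ->
  forall s, a <= s <= b -> Q s.
Proof.
  intros Hab Hstep.
  set (E := fun x => a <= x <= b /\ forall s, a <= s < x -> Q s).
  assert (HE : bound E) by (exists b; intros x [Hx _]; lra).
  assert (Ha : E a) by (split; [lra | intros; lra]).
  destruct (completeness E HE (ex_intro _ a Ha)) as [c [Hub Hlub]].
  assert (Hac : a <= c) by (apply Hub; auto).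
  assert (Hcb : c <= b) by (apply Hlub; intros x [Hx _]; lra).
  assert (Hc : forall s, a <= s < c -> Q s).
  { intros s Hs. apply NNPP; intro HQ.
    assert (c <= s); [|lra]. apply Hlub. intros x [_ Hx].
    destruct (Rle_or_lt x s); auto. exfalso; apply HQ, Hx; lra. }
  destruct (Hstep c (conj Hac Hcb) Hc) as [d [Hd Hd']].
  assert (Hcb' : c = b).
  { destruct (Rle_or_lt b c) as [|Hlt]; [lra|]. exfalso.
    assert (Hx : E (Rmin (c + d / 2) b)).
    { pose proof (Rmin_l (c + d / 2) b). pose proof (Rmin_r (c + d / 2) b).
      split; [split; [apply Rmin_glb|]; lra|].
      intros s Hs. destruct (Rlt_or_le s c); [apply Hc | apply Hd']; lra. }
    pose proof (Hub _ Hx). unfold Rmin in *. destruct (Rle_dec (c + d / 2) b); lra. }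
  subst c. intros s Hs. destruct (Rlt_or_le s b); [apply Hc | apply Hd']; lra.
Qed.

Lemma halving_zero (z D : R) : 0 <= D -> (forall k, Rabs z <= D / 2 ^ k) -> z = 0.
Proof.
  intros HD Hz. apply NNPP; intro Hz0. pose proof (Rabs_pos_lt z Hz0).
  destruct (pow_lt_1_zero (/ 2)) with (y := Rabs z / (D + 1)) as [N HN].
  - rewrite Rabs_right; lra.
  - apply Rdiv_lt_0_compat; lra.
  - specialize (HN N (Nat.le_refl N)). specialize (Hz N).
    pose proof (pow_le (/ 2) N ltac:(lra)).
    rewrite Rabs_right in HN by lra. unfold Rdiv in Hz. rewrite <- pow_inv in Hz.
    apply (Rmult_lt_compat_r (D + 1)) in HN; [|lra].
    unfold Rdiv in HN. rewrite Rmult_assoc, Rinv_l, Rmult_1_r in HN by lra. nra.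
Qed.

Lemma RiemannInt_diff_tail_bound (g1 g2 : R -> R) (a b T C : R)
  (pr1 : Riemann_integrable g1 a b) (pr2 : Riemann_integrable g2 a b) :
  a <= b -> T <= b -> 0 <= C ->
  (forall s, a < s < b -> s < T -> g1 s = g2 s) ->
  (forall s, a < s < b -> T <= s -> Rabs (g1 s - g2 s) <= C) ->
  Rabs (RiemannInt pr1 - RiemannInt pr2) <= C * (b - T).
Proof.
  intros Hab HTb HC Heq Hle.
  pose proof (RiemannInt_P10 (-1) pr1 pr2) as pr.
  replace (RiemannInt pr1 - RiemannInt pr2) with (RiemannInt pr)
    by (rewrite (RiemannInt_P12 pr1 pr2 pr Hab); ring).
  destruct (Rle_or_lt T a) as [HTa|HaT].
  - destruct (@RiemannInt_const_bound _ a b (-C) C pr Hab).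
    { intros x Hx. pose proof (Rabs_le_inv _ _ (Hle x Hx ltac:(lra))); lra. }
    apply Rabs_le. nra.
  - pose proof (RiemannInt_P22 pr (conj (Rlt_le _ _ HaT) HTb)) as pra.
    pose proof (RiemannInt_P23 pr (conj (Rlt_le _ _ HaT) HTb)) as prb.
    rewrite <- (RiemannInt_P26 pra prb pr).
    assert (Hpra : RiemannInt pra = 0).
    { rewrite (RiemannInt_P18 pra (RiemannInt_P14 a T 0)), RiemannInt_P15; [ring | lra |].
      intros x Hx. unfold fct_cte. rewrite Heq; lra. }
    destruct (@RiemannInt_const_bound _ T b (-C) C prb HTb).
    { intros x Hx. pose proof (Rabs_le_inv _ _ (Hle x ltac:(lra) ltac:(lra))); lra. }
    rewrite Hpra. apply Rabs_le. nra.
Qed.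

Lemma Fin_eventually n (P : Fin.t n -> nat -> Prop) :
  (forall i, exists N, forall k, (N <= k)%nat -> P i k) ->
  exists N, forall k, (N <= k)%nat -> forall i, P i k.
Proof.
  revert P; induction n as [|n IH]; intros P H.
  - exists 0%nat. intros k _ i. apply (Fin.case0 (fun i => P i k)).
  - destruct (H Fin.F1) as [N0 HN0].
    destruct (IH (fun j => P (Fin.FS j))) as [N1 HN1]; [intro j; apply H|].
    exists (Nat.max N0 N1). intros k Hk i.
    apply (Fin.caseS' i (fun i => P i k)); [apply HN0 | intro j; apply (HN1 k)]; lia.
Qed.

Lemma pt_cv_close {n : nat} (u : nat -> pt n) (l : pt n) : pt_cv u l ->
  forall d, 0 < d -> exists N, forall k, (N <= k)%nat -> close l (u k) d.
Proof.
  intros H d Hd. apply (Fin_eventually n (fun i k => Rabs (l i - u k i) < d)).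
  intro i. destruct (H i d Hd) as [N HN]. exists N. intros k Hk.
  rewrite Rabs_minus_sym. apply HN; auto.
Qed.

Section Compact.
Variables (n : nat) (Omega : subset n).
Hypothesis HOmega : compact_set Omega.

Lemma Cfun_cluster_value (u : pt n -> R) : Cfun Omega u ->
  forall x : nat -> pt n, (forall k, Omega (x k)) ->
  exists l, Omega l /\ forall eps N, 0 < eps ->
    exists k, (N <= k)%nat /\ Rabs (u (x k) - u l) < eps.
Proof.
  intros Hu x Hx. destruct (HOmega x Hx) as [sub [l [Hsub [Hl Hcv]]]].
  assert (Hsub_ge : forall k, (k <= sub k)%nat)
    by (induction k; [lia | specialize (Hsub k); lia]).
  exists l. split; auto. intros eps N Heps.
  destruct (Hu l Hl eps Heps) as [d [Hd Hclose]].
  destruct (pt_cv_close _ _ Hcv d Hd) as [N' HN'].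
  exists (sub (Nat.max N N')). split.
  - specialize (Hsub_ge (Nat.max N N')). lia.
  - apply Hclose; auto. apply HN'. lia.
Qed.

Lemma Cfun_bounded (u : pt n -> R) : Cfun Omega u ->
  exists B, forall x, Omega x -> Rabs (u x) <= B.
Proof.
  intros Hu. apply NNPP; intro Hunb.
  assert (Hx : forall k : nat, exists x, Omega x /\ INR k < Rabs (u x)).
  { intro k. apply NNPP; intro Hk. apply Hunb. exists (INR k). intros x Hx.
    apply Rnot_lt_le; intro. apply Hk; eauto. }
  destruct (choice _ Hx) as [x Hx'].
  destruct (Cfun_cluster_value u Hu x (fun k => proj1 (Hx' k))) as [l [_ Hcl]].
  destruct (INR_archimed 1 (Rabs (u l) + 1)) as [N HN]; [lra|].
  destruct (Hcl 1 N) as [k [Hk Hclose]]; [lra|].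
  apply le_INR in Hk. pose proof (proj2 (Hx' k)).
  pose proof (Rabs_triang_inv (u (x k)) (u l)). lra.
Qed.

Lemma Cfun_pos_lower_bound (u : pt n -> R) : Cfun Omega u ->
  (forall x, Omega x -> 0 < u x) -> exists m, 0 < m /\ forall x, Omega x -> m <= u x.
Proof.
  intros Hu Hpos. apply NNPP; intro Hnb.
  assert (Hx : forall k : nat, exists x, Omega x /\ u x < / (INR k + 1)).
  { intro k. apply NNPP; intro Hk. apply Hnb. exists (/ (INR k + 1)).
    split; [apply RinvN_pos|]. intros x Hx. apply Rnot_lt_le; intro. apply Hk; eauto. }
  destruct (choice _ Hx) as [x Hx'].
  destruct (Cfun_cluster_value u Hu x (fun k => proj1 (Hx' k))) as [l [Hl Hcl]].
  pose proof (Hpos l Hl).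
  pose proof RinvN_cv as Hcv. destruct (Hcv (u l / 2)) as [N HN]; [lra|].
  destruct (Hcl (u l / 2) N) as [k [Hk Hclose]]; [lra|].
  specialize (HN k Hk). unfold R_dist, RinvN in HN; simpl in HN.
  rewrite Rminus_0_r, Rabs_right in HN by (left; apply RinvN_pos).
  pose proof (proj2 (Hx' k)). apply Rabs_def2 in Hclose. lra.
Qed.

Lemma Ccurve_bounded (g : R -> pt n -> R) (a b : R) : a <= b ->
  Ccurve Omega (fun t => a <= t <= b) g ->
  exists B, forall t, a <= t <= b -> nle Omega (g t) B.
Proof.
  intros Hab [Hcf Hct].
  assert (H : forall s, a <= s <= b ->
            exists B, forall t, a <= t <= s -> nle Omega (g t) B).
  { apply real_interval_ind; auto. intros T HT IH.
    destruct (Hct T HT 1) as [d [Hd Hclose]]; [lra|].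
    destruct (Cfun_bounded (g T) (Hcf T HT)) as [BT HBT].
    assert (Hnear : forall t, a <= t <= b -> Rabs (t - T) < d -> nle Omega (g t) (BT + 1)).
    { intros t Ht Htd x Hx. specialize (Hclose t Ht Htd x Hx). specialize (HBT x Hx).
      unfold fsub in Hclose. pose proof (Rabs_triang_inv (g t x) (g T x)). lra. }
    exists d. split; auto. intros s Hs HTs.
    destruct (Rlt_or_le a T) as [HaT|HTa].
    - set (s0 := Rmax a (T - d / 2)).
      assert (Hs0 : a <= s0 < T) by (unfold s0, Rmax; destruct (Rle_dec a (T - d / 2)); lra).
      destruct (IH s0 Hs0) as [B0 HB0].
      exists (Rmax B0 (BT + 1)). intros t Ht x Hx.
      destruct (Rle_or_lt t s0).
      + eapply Rle_trans; [apply HB0; auto; lra | apply Rmax_l].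
      + eapply Rle_trans; [apply Hnear; auto | apply Rmax_r]; [lra|].
        apply Rabs_def1; unfold s0 in *; pose proof (Rmax_r a (T - d / 2)); lra.
    - exists (BT + 1). intros t Ht. apply Hnear; [lra|]. apply Rabs_def1; lra. }
  destruct (H b ltac:(lra)) as [B HB]. exists B. intros t Ht. apply HB; lra.
Qed.

End Compact.

Lemma Ccurve_restrict {n : nat} (Omega : subset n) (I J : R -> Prop) (g : R -> pt n -> R) :
  (forall t, J t -> I t) -> Ccurve Omega I g -> Ccurve Omega J g.
Proof.
  intros HJI [Hc Ht]. split; [auto|]. intros t Hjt eps Heps.
  destruct (Ht t (HJI t Hjt) eps Heps) as [d [Hd Hd']]. eauto.
Qed.

Lemma Lip_alpha_lipschitz_on {n : nat} (Omega : subset n) alpha phi a b (K : R) :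
  0 <= alpha -> Lip_alpha_bounds Omega alpha phi a b -> 0 <= K ->
  exists Lp, 0 <= Lp /\ forall t1 t2, -K <= t1 <= 0 -> -K <= t2 <= 0 ->
    forall y, Omega y -> Rabs (phi t1 y - phi t2 y) <= Lp * Rabs (t1 - t2).
Proof.
  intros Hal [_ [Ha Hb]] HK. set (E := exp (alpha * K)).
  assert (HE : 0 < E) by apply exp_pos.
  exists (E * (Rabs b + Rabs a * alpha)). split.
  { pose proof (Rabs_pos a). pose proof (Rabs_pos b). apply Rmult_le_pos; nra. }
  intros t1 t2 Ht1 Ht2 y Hy.
  set (e1 := exp (alpha * Rabs t1)). set (e2 := exp (alpha * Rabs t2)).
  set (g1 := exp (- alpha * Rabs t1) * phi t1 y).
  set (g2 := exp (- alpha * Rabs t2) * phi t2 y).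
  (* phi = e^{alpha |t|} g, with g bounded by [a] and [b]-Lipschitz *)
  assert (Hphi : forall t, phi t y = exp (alpha * Rabs t) * (exp (- alpha * Rabs t) * phi t y)).
  { intro t. rewrite <- Rmult_assoc, <- exp_plus.
    replace (alpha * Rabs t + - alpha * Rabs t) with 0 by ring. rewrite exp_0; ring. }
  rewrite (Hphi t1), (Hphi t2); fold e1 e2 g1 g2.
  replace (e1 * g1 - e2 * g2) with (e1 * (g1 - g2) + g2 * (e1 - e2)) by ring.
  eapply Rle_trans; [apply Rabs_triang|]. rewrite !Rabs_mult.
  assert (Habs : forall t, -K <= t <= 0 -> alpha * Rabs t <= alpha * K).
  { intros t Ht. apply Rmult_le_compat_l; auto. rewrite Rabs_left1; lra. }
  assert (He1 : Rabs e1 <= E).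
  { unfold e1. rewrite Rabs_right by (left; apply exp_pos). apply exp_le_compat, Habs; auto. }
  assert (Hg : Rabs (g1 - g2) <= b * Rabs (t1 - t2)) by (apply Hb; lra || auto).
  assert (Hg2 : Rabs g2 <= a) by (apply (Ha t2); lra || auto).
  assert (Hee : Rabs (e1 - e2) <= E * (alpha * Rabs (t1 - t2))).
  { unfold e1, e2. eapply Rle_trans; [apply exp_lipschitz_le; apply Habs; auto|].
    apply Rmult_le_compat_l; [lra|].
    rewrite <- Rmult_minus_distr_l, Rabs_mult, (Rabs_right alpha) by lra.
    apply Rmult_le_compat_l; auto. apply Rabs_triang_inv2. }
  pose proof (Rabs_pos (e1 - e2)). pose proof (Rabs_pos (g1 - g2)).
  pose proof (Rabs_pos (t1 - t2)). pose proof (Rabs_pos g2). pose proof (Rabs_pos e1).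
  pose proof (Rle_abs a). pose proof (Rle_abs b).
  assert (Rabs e1 * Rabs (g1 - g2) <= E * (Rabs b * Rabs (t1 - t2))).
  { apply Rmult_le_compat; auto. eapply Rle_trans; [apply Hg|].
    apply Rmult_le_compat_r; auto. }
  assert (Rabs g2 * Rabs (e1 - e2) <= Rabs a * (E * (alpha * Rabs (t1 - t2))))
    by (apply Rmult_le_compat; auto; lra).
  nra.
Qed.

Section Delay_system.
Variables (n : nat) (Omega : subset n).

Definition F_lipschitz_on (F : Fop n) (M L : R) : Prop :=
  forall u v w u' v' w',
    Cfun Omega u -> Cfun Omega v -> Cfun2 Omega w ->
    Cfun Omega u' -> Cfun Omega v' -> Cfun2 Omega w' ->
    nle Omega u M -> nle Omega v M -> nle2 Omega w M ->
    nle Omega u' M -> nle Omega v' M -> nle2 Omega w' M ->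
    forall a b c, nle Omega (fsub u u') a -> nle Omega (fsub v v') b ->
      nle2 Omega (fsub2 w w') c ->
      nle Omega (fsub (F u v w) (F u' v' w')) (L * (a + b + c)).

Definition f_lipschitz_on (f : (pt n -> R) -> (pt n -> R)) (L : R) : Prop :=
  forall u u', Cfun Omega u -> Cfun Omega u' ->
    forall a, nle Omega (fsub u u') a -> nle Omega (fsub (f u) (f u')) (L * a).

Definition args_in_ball (M : R) (u v : pt n -> R) (w : pt n -> pt n -> R) : Prop :=
  Cfun Omega u /\ Cfun Omega v /\ Cfun2 Omega w /\
  nle Omega u M /\ nle Omega v M /\ nle2 Omega w M.

Definition delayed (A tau : R -> pt n -> R) (l : R) : pt n -> pt n -> R :=
  fun x y => A (l - tau l x) y.

Lemma Cfun_const (c : R) : Cfun Omega (fun _ => c).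
Proof. intros x _ eps Heps. exists 1. split; [lra|]. intros. rewrite Rminus_diag, Rabs_R0; auto. Qed.

Lemma Cfun2_const (c : R) : Cfun2 Omega (fun _ _ => c).
Proof. intros x y _ _ eps Heps. exists 1. split; [lra|]. intros. rewrite Rminus_diag, Rabs_R0; auto. Qed.

Lemma args_in_ball_0 (M : R) : 0 <= M -> args_in_ball M (fun _ => 0) (fun _ => 0) (fun _ _ => 0).
Proof.
  intro HM. repeat split; try apply Cfun_const; try apply Cfun2_const;
    intros x; try intro y; intros; rewrite Rabs_R0; auto.
Qed.

Lemma nle_fsub_0 (u u' : pt n -> R) :
  nle Omega (fsub u u') 0 <-> forall x, Omega x -> u x = u' x.
Proof.
  split; intros H x Hx; unfold fsub.
  - pose proof (Rabs_le_inv _ _ (H x Hx)). unfold fsub in *. lra.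
  - rewrite H, Rminus_diag, Rabs_R0 by auto. lra.
Qed.

Lemma nle2_fsub2_0 (w w' : pt n -> pt n -> R) :
  (forall x y, Omega x -> Omega y -> w x y = w' x y) -> nle2 Omega (fsub2 w w') 0.
Proof. intros H x y Hx Hy. unfold fsub2. rewrite H, Rminus_diag, Rabs_R0 by auto. lra. Qed.

Lemma F_lipschitz_on_ball F M L u v w u' v' w' :
  F_lipschitz_on F M L -> args_in_ball M u v w -> args_in_ball M u' v' w' ->
  forall a b c, nle Omega (fsub u u') a -> nle Omega (fsub v v') b ->
    nle2 Omega (fsub2 w w') c ->
    nle Omega (fsub (F u v w) (F u' v' w')) (L * (a + b + c)).
Proof. intros HL (? & ? & ? & ? & ? & ?) (? & ? & ? & ? & ? & ?). apply HL; auto. Qed.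

Lemma F_lipschitz_on_eq F M L u v w u' v' w' :
  F_lipschitz_on F M L -> args_in_ball M u v w -> args_in_ball M u' v' w' ->
  (forall x, Omega x -> u x = u' x) -> (forall x, Omega x -> v x = v' x) ->
  (forall x y, Omega x -> Omega y -> w x y = w' x y) ->
  forall x, Omega x -> F u v w x = F u' v' w' x.
Proof.
  intros HL Hb Hb' Eu Ev Ew. apply nle_fsub_0.
  pose proof (F_lipschitz_on_ball F M L u v w u' v' w' HL Hb Hb' 0 0 0) as H.
  rewrite !Rplus_0_r, Rmult_0_r in H.
  apply H; [apply nle_fsub_0.. | apply nle2_fsub2_0]; auto.
Qed.

Lemma f_lipschitz_on_eq f L u u' : f_lipschitz_on f L -> Cfun Omega u -> Cfun Omega u' ->
  (forall x, Omega x -> u x = u' x) -> forall x, Omega x -> f u x = f u' x.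
Proof.
  intros HL Hu Hu' E. apply nle_fsub_0. rewrite <- (Rmult_0_r L).
  apply HL; auto. apply nle_fsub_0; auto.
Qed.

Lemma F_assumption_lipschitz (F : Fop n) : F_assumption Omega F ->
  forall M, 0 < M -> exists L, 0 <= L /\ F_lipschitz_on F M L.
Proof.
  intros [_ HF] M HM. destruct (HF M HM) as [L HL].
  exists (Rmax L 0). split; [apply Rmax_r|].
  intros u v w u' v' w' Hu Hv Hw Hu' Hv' Hw' HuM HvM HwM Hu'M Hv'M Hw'M a b c Ha Hb Hc x Hx.
  pose proof (Rabs_pos (fsub u u' x)). pose proof (Ha x Hx).
  pose proof (Rabs_pos (fsub v v' x)). pose proof (Hb x Hx).
  pose proof (Rabs_pos (fsub2 w w' x x)). pose proof (Hc x x Hx Hx).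
  eapply Rle_trans.
  { exact (HL u v w u' v' w' Hu Hv Hw Hu' Hv' Hw' HuM HvM HwM Hu'M Hv'M Hw'M a b c Ha Hb Hc x Hx). }
  apply Rmult_le_compat_r; [lra | apply Rmax_l].
Qed.

Lemma f_assumption_lipschitz f Mf : f_assumption Omega f Mf ->
  exists L, 0 <= L /\ f_lipschitz_on f L.
Proof.
  intros [_ [[L HL] _]]. exists (Rmax L 0). split; [apply Rmax_r|].
  intros u u' Hu Hu' a Ha x Hx.
  pose proof (Rabs_pos (fsub u u' x)). pose proof (Ha x Hx).
  eapply Rle_trans; [exact (HL u u' Hu Hu' a Ha x Hx)|].
  apply Rmult_le_compat_r; [lra | apply Rmax_l].
Qed.

Lemma f_lower_bound f Mf (M : R) : compact_set Omega -> f_assumption Omega f Mf ->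
  exists m, 0 < m /\ forall u, Cfun Omega u -> nle Omega u M -> forall x, Omega x -> m <= f u x.
Proof.
  intros HOmega (Hfc & _ & Hfpos & Hfmono).
  destruct (Cfun_pos_lower_bound n Omega HOmega (f (fun _ => M))) as [m [Hm0 Hm]].
  - apply Hfc, Cfun_const.
  - intros x Hx. apply (Hfpos _ (Cfun_const M) x Hx).
  - exists m. split; auto. intros u Hu HuM x Hx.
    eapply Rle_trans; [apply (Hm x Hx)|].
    apply Hfmono; auto; [apply Cfun_const|]. intros y Hy.
    pose proof (Rabs_le_inv _ _ (HuM y Hy)). lra.
Qed.

Lemma delayed_Cfun2 (r l : R) (A tau : R -> pt n -> R) :
  Ccurve Omega (fun t => t <= r) A -> Cplus Omega (tau l) -> l <= r ->
  Cfun2 Omega (delayed A tau l).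
Proof.
  intros [HAc HAt] [Htc Htp] Hl x y Hx Hy eps Heps. unfold delayed.
  set (s0 := l - tau l x).
  assert (Hs0 : s0 <= r) by (unfold s0; pose proof (Htp x Hx); lra).
  destruct (HAt s0 Hs0 (eps / 3)) as [d1 [Hd1 Hd1']]; [lra|].
  destruct (Htc x Hx d1 Hd1) as [d2 [Hd2 Hd2']].
  destruct (HAc s0 Hs0 y Hy (eps / 3)) as [d3 [Hd3 Hd3']]; [lra|].
  exists (Rmin d2 d3). split; [apply Rmin_glb_lt; auto|].
  intros x' y' Hx' Hy' Hxx' Hyy'.
  assert (Hmin : forall z z' : pt n, close z z' (Rmin d2 d3) -> close z z' d2 /\ close z z' d3).
  { intros z z' Hz; split; intro i; specialize (Hz i);
      pose proof (Rmin_l d2 d3); pose proof (Rmin_r d2 d3); lra. }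
  assert (Ht : Rabs (l - tau l x' - s0) < d1).
  { unfold s0. replace (l - tau l x' - (l - tau l x)) with (- (tau l x' - tau l x)) by ring.
    rewrite Rabs_Ropp. apply Hd2'; auto. apply Hmin; auto. }
  pose proof (Htp x' Hx').
  specialize (Hd1' (l - tau l x') ltac:(lra) Ht y' Hy'). unfold fsub in Hd1'.
  specialize (Hd3' y' Hy' ltac:(apply Hmin; auto)).
  replace (A (l - tau l x') y' - A s0 y) with
    ((A (l - tau l x') y' - A s0 y') + (A s0 y' - A s0 y)) by ring.
  eapply Rle_lt_trans; [apply Rabs_triang|]. lra.
Qed.

Variables (F : Fop n) (f : (pt n -> R) -> (pt n -> R))
  (phi : R -> pt n -> R) (tau0 : pt n -> R) (r : R).

Definition bounded_solution (K M : R) (A tau : R -> pt n -> R) : Prop :=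
  0 <= K /\
  (forall s, 0 <= s <= r -> forall x, Omega x -> tau s x <= K) /\
  (forall s, -K <= s <= r -> nle Omega (A s) M) /\
  (forall s, 0 <= s <= r -> nle Omega (tau s) M).

Lemma solution_args_in_ball K M A tau :
  is_solution Omega F f phi tau0 r A tau -> bounded_solution K M A tau ->
  forall s, 0 <= s <= r -> args_in_ball M (A s) (tau s) (delayed A tau s).
Proof.
  intros (HA & _ & Hpos & _) (HK0 & HK & HMA & HMt) s Hs.
  destruct (Hpos s Hs) as [Htc Htp].
  repeat split; auto.
  - apply (proj1 HA); lra.
  - apply (delayed_Cfun2 r); auto; lra.
  - apply HMA; lra.
  - intros x y Hx Hy. unfold delayed.
    pose proof (Htp x Hx). pose proof (HK s Hs x Hx). apply HMA; auto; lra.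
Qed.

Lemma solution_integrand_bounded K M L A tau : compact_set Omega -> F_assumption Omega F ->
  is_solution Omega F f phi tau0 r A tau -> bounded_solution K M A tau ->
  0 <= M -> 0 <= L -> F_lipschitz_on F M L ->
  exists C, 0 <= C /\ forall l, 0 <= l <= r -> forall y, Omega y ->
    Rabs (F (A l) (tau l) (delayed A tau l) y) <= C.
Proof.
  intros HOmega [HFc _] Hsol Hbd HM HL0 HL.
  set (F0 := F (fun _ => 0) (fun _ => 0) (fun _ _ => 0)).
  destruct (Cfun_bounded n Omega HOmega F0) as [B HB].
  { apply HFc; [apply Cfun_const.. | apply Cfun2_const]. }
  exists (Rmax B 0 + L * (M + M + M)). split.
  { pose proof (Rmax_r B 0). pose proof (Rmult_le_pos L (M + M + M)). lra. }
  intros l Hl y Hy.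
  pose proof (solution_args_in_ball K M A tau Hsol Hbd l Hl) as Hball.
  pose proof Hball as (_ & _ & _ & HuM & HvM & HwM).
  assert (Hlip := F_lipschitz_on_ball F M L _ _ _ _ _ _ HL Hball (args_in_ball_0 M HM) M M M).
  assert (Hdiff : Rabs (F (A l) (tau l) (delayed A tau l) y - F0 y) <= L * (M + M + M)).
  { apply Hlip; auto; intros x; try intro z; intros;
      unfold fsub, fsub2; rewrite Rminus_0_r; [apply HuM | apply HvM | apply HwM]; auto. }
  pose proof (HB y Hy). pose proof (Rmax_l B 0).
  pose proof (Rabs_triang_inv (F (A l) (tau l) (delayed A tau l) y) (F0 y)). lra.
Qed.

Lemma solution_lipschitz_on_0_r A tau C :
  is_solution Omega F f phi tau0 r A tau ->
  (forall l, 0 <= l <= r -> forall y, Omega y -> Rabs (F (A l) (tau l) (delayed A tau l) y) <= C) ->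
  forall s1 s2, 0 <= s2 <= s1 -> s1 <= r -> forall y, Omega y ->
    Rabs (A s1 y - A s2 y) <= C * (s1 - s2).
Proof.
  intros (_ & _ & _ & _ & Hint & _) HC s1 s2 Hs Hs1 y Hy.
  destruct (Hint s1 ltac:(lra) y Hy) as [pr1 ->].
  destruct (Hint s2 ltac:(lra) y Hy) as [pr2 ->].
  pose proof (RiemannInt_P22 pr1 Hs) as pra. pose proof (RiemannInt_P23 pr1 Hs) as prb.
  rewrite <- (RiemannInt_P26 pra prb pr1), (RiemannInt_P5 pra pr2).
  replace (phi 0 y + (RiemannInt pr2 + RiemannInt prb) - (phi 0 y + RiemannInt pr2))
    with (RiemannInt prb) by ring.
  destruct (@RiemannInt_const_bound _ s2 s1 (-C) C prb ltac:(lra)).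
  { intros x Hx. apply Rabs_le_inv. apply HC; auto; lra. }
  apply Rabs_le. lra.
Qed.

Lemma solution_lipschitz A tau C Lp K :
  is_solution Omega F f phi tau0 r A tau -> 0 <= C -> 0 <= Lp ->
  (forall s1 s2, 0 <= s2 <= s1 -> s1 <= r -> forall y, Omega y ->
    Rabs (A s1 y - A s2 y) <= C * (s1 - s2)) ->
  (forall t1 t2, -K <= t1 <= 0 -> -K <= t2 <= 0 ->
    forall y, Omega y -> Rabs (phi t1 y - phi t2 y) <= Lp * Rabs (t1 - t2)) ->
  forall s1 s2, -K <= s1 <= r -> -K <= s2 <= r -> forall y, Omega y ->
    Rabs (A s1 y - A s2 y) <= (C + Lp) * Rabs (s1 - s2).
Proof.
  intros (_ & _ & _ & Hinit & _) HC HLp Hpos Hphi.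
  assert (Hle : forall s1 s2, -K <= s2 <= s1 -> s1 <= r -> forall y, Omega y ->
    Rabs (A s1 y - A s2 y) <= (C + Lp) * (s1 - s2)).
  { intros s1 s2 Hs Hs1 y Hy. destruct (Rle_or_lt 0 s2).
    - specialize (Hpos s1 s2 ltac:(lra) Hs1 y Hy). nra.
    - assert (Hhist : forall t, s2 <= t <= 0 -> Rabs (A t y - A s2 y) <= Lp * (t - s2)).
      { intros t Ht. rewrite !Hinit by (auto; lra).
        rewrite <- (Rabs_right (t - s2)) by lra. apply Hphi; auto; lra. }
      destruct (Rle_or_lt s1 0).
      + specialize (Hhist s1 ltac:(lra)). nra.
      + replace (A s1 y - A s2 y) with ((A s1 y - A 0 y) + (A 0 y - A s2 y)) by ring.
        eapply Rle_trans; [apply Rabs_triang|].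
        specialize (Hhist 0 ltac:(lra)). specialize (Hpos s1 0 ltac:(lra) Hs1 y Hy). nra. }
  intros s1 s2 H1 H2 y Hy. destruct (Rle_or_lt s2 s1).
  - rewrite (Rabs_right (s1 - s2)) by lra. apply Hle; auto; lra.
  - rewrite Rabs_minus_sym, (Rabs_minus_sym s1 s2), (Rabs_right (s2 - s1)) by lra.
    apply Hle; auto; lra.
Qed.

(* The threshold condition: both delays integrate [f] back to the same value,
   so where [f (Ai) >= m] the delay gap is at most [1/m] times the gap of
   the integrals of [f (Ai)] and [f (Aj)] over [t - tauj t x, t]. *)
Lemma delay_gap_one_sided Ai taui Aj tauj (Lf K m T t D : R) (x : pt n) :
  is_solution Omega F f phi tau0 r Ai taui -> is_solution Omega F f phi tau0 r Aj tauj ->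
  f_lipschitz_on f Lf -> 0 <= Lf -> 0 <= D ->
  (forall s, -K <= s <= r -> forall x, Omega x -> m <= f (Ai s) x) ->
  (forall s, 0 <= s <= r -> forall x, Omega x -> taui s x <= K) ->
  (forall s, s < T -> forall y, Omega y -> Ai s y = Aj s y) ->
  (forall s, T <= s <= t -> forall y, Omega y -> Rabs (Ai s y - Aj s y) <= D) ->
  0 <= T <= t -> t <= r -> Omega x -> tauj t x <= taui t x ->
  m * (taui t x - tauj t x) <= Lf * D * (t - T).
Proof.
  intros Hsi Hsj HLf HLf0 HD0 Hm HK Heq HD HTt Htr Hx Hle.
  destruct Hsi as ([HAic _] & _ & _ & _ & _ & Htaui).
  destruct Hsj as ([HAjc _] & _ & Hjpos & _ & _ & Htauj).
  destruct (Htaui t ltac:(lra) x Hx) as [pri [pphi Ei]].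
  destruct (Htauj t ltac:(lra) x Hx) as [prj [pphi' Ej]].
  rewrite (RiemannInt_P5 pphi' pphi), <- Ei in Ej.
  pose proof (proj2 (Hjpos t ltac:(lra)) x Hx).
  assert (Hord : t - taui t x <= t - tauj t x <= t) by lra.
  pose proof (RiemannInt_P22 pri Hord) as pra. pose proof (RiemannInt_P23 pri Hord) as prb.
  rewrite <- (RiemannInt_P26 pra prb pri) in Ej.
  assert (Hpra : m * (taui t x - tauj t x) <= RiemannInt pra).
  { replace (taui t x - tauj t x) with ((t - tauj t x) - (t - taui t x)) by ring.
    rewrite <- (RiemannInt_P15 (RiemannInt_P14 (t - taui t x) (t - tauj t x) m)).
    apply RiemannInt_P19; [lra|]. intros s Hs. unfold fct_cte.
    pose proof (HK t ltac:(lra) x Hx). apply Hm; auto; lra. }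
  assert (Hprb : Rabs (RiemannInt prj - RiemannInt prb) <= Lf * D * (t - T)).
  { apply RiemannInt_diff_tail_bound; [lra | lra | apply Rmult_le_pos; lra | |].
    - intros s Hs HsT. apply (f_lipschitz_on_eq f Lf); auto; try (apply HAjc || apply HAic; lra).
      intros y Hy. symmetry; apply Heq; auto.
    - intros s Hs HsT. apply (HLf (Aj s) (Ai s)); auto; try (apply HAjc || apply HAic; lra).
      intros y Hy. unfold fsub. rewrite Rabs_minus_sym. apply HD; auto; lra. }
  apply Rabs_le_inv in Hprb. lra.
Qed.

Lemma two_solutions_bounded A1 tau1 A2 tau2 : compact_set Omega -> 0 <= r ->
  is_solution Omega F f phi tau0 r A1 tau1 -> is_solution Omega F f phi tau0 r A2 tau2 ->
  exists K M, 0 < M /\ bounded_solution K M A1 tau1 /\ bounded_solution K M A2 tau2.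
Proof.
  intros HOmega Hr (HA1 & Ht1 & _) (HA2 & Ht2 & _).
  destruct (Ccurve_bounded n Omega HOmega tau1 0 r Hr Ht1) as [B1 HB1].
  destruct (Ccurve_bounded n Omega HOmega tau2 0 r Hr Ht2) as [B2 HB2].
  set (K := Rmax (Rmax B1 B2) 0).
  assert (HK : 0 <= K /\ B1 <= K /\ B2 <= K).
  { unfold K. pose proof (Rmax_l B1 B2). pose proof (Rmax_r B1 B2).
    pose proof (Rmax_l (Rmax B1 B2) 0). pose proof (Rmax_r (Rmax B1 B2) 0). lra. }
  assert (Hhist : forall t, -K <= t <= r -> t <= r) by (intros; lra).
  destruct (Ccurve_bounded n Omega HOmega A1 (-K) r ltac:(lra)
              (Ccurve_restrict Omega _ _ A1 Hhist HA1)) as [C1 HC1].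
  destruct (Ccurve_bounded n Omega HOmega A2 (-K) r ltac:(lra)
              (Ccurve_restrict Omega _ _ A2 Hhist HA2)) as [C2 HC2].
  set (M := Rmax (Rmax C1 C2) K + 1).
  assert (HM : C1 <= M /\ C2 <= M /\ K + 1 <= M).
  { unfold M. pose proof (Rmax_l C1 C2). pose proof (Rmax_r C1 C2).
    pose proof (Rmax_l (Rmax C1 C2) K). pose proof (Rmax_r (Rmax C1 C2) K). lra. }
  exists K, M. repeat split; try lra; intros s Hs x Hx.
  - pose proof (Rle_abs (tau1 s x)). pose proof (HB1 s Hs x Hx). lra.
  - pose proof (HC1 s Hs x Hx). lra.
  - pose proof (HB1 s Hs x Hx). lra.
  - pose proof (Rle_abs (tau2 s x)). pose proof (HB2 s Hs x Hx). lra.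
  - pose proof (HC2 s Hs x Hx). lra.
  - pose proof (HB2 s Hs x Hx). lra.
Qed.

Section Two_solutions.
Variables (A1 tau1 A2 tau2 : R -> pt n -> R) (K M L Lf Lam m : R).
Hypotheses (H1 : is_solution Omega F f phi tau0 r A1 tau1)
  (H2 : is_solution Omega F f phi tau0 r A2 tau2).
Hypotheses (HB1 : bounded_solution K M A1 tau1) (HB2 : bounded_solution K M A2 tau2).
Hypotheses (HM0 : 0 <= M) (HL0 : 0 <= L) (HL : F_lipschitz_on F M L)
  (HLf0 : 0 <= Lf) (HLf : f_lipschitz_on f Lf).
Hypotheses (HLam0 : 0 <= Lam) (HLam : forall s1 s2, -K <= s1 <= r -> -K <= s2 <= r ->
  forall y, Omega y -> Rabs (A1 s1 y - A1 s2 y) <= Lam * Rabs (s1 - s2)).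
Hypotheses (Hm0 : 0 < m)
  (Hm : forall u, Cfun Omega u -> nle Omega u M -> forall x, Omega x -> m <= f u x).

Definition agree_before (T : R) : Prop :=
  (forall s, s < T -> forall y, Omega y -> A1 s y = A2 s y) /\
  (forall s, 0 <= s < T -> forall y, Omega y -> tau1 s y = tau2 s y).

Definition gap_le (T t D : R) : Prop :=
  forall s, T <= s <= t -> forall y, Omega y ->
    Rabs (A1 s y - A2 s y) <= D /\ Rabs (tau1 s y - tau2 s y) <= D.

Lemma A_gap_le_before (T t D : R) : agree_before T -> gap_le T t D -> 0 <= D ->
  forall s, s <= t -> forall y, Omega y -> Rabs (A1 s y - A2 s y) <= D.
Proof.
  intros [HA _] Hgap HD s Hs y Hy. destruct (Rlt_or_le s T).
  - rewrite HA, Rminus_diag, Rabs_R0; auto.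
  - apply Hgap; auto; lra.
Qed.

(* The delayed arguments differ by the A-gap plus, through the Lipschitz
   continuity of [A1] in time, [Lam] times the delay gap. *)
Lemma A_gap_le (T t D : R) (x : pt n) : agree_before T -> gap_le T t D -> 0 <= D ->
  0 <= T <= t -> t <= r -> Omega x ->
  Rabs (A1 t x - A2 t x) <= L * (3 + Lam) * D * (t - T).
Proof.
  intros Hag Hgap HD HTt Htr Hx.
  pose proof Hag as [HA Htau].
  pose proof H1 as (_ & _ & Hpos1 & _ & Hint1 & _).
  pose proof H2 as (_ & _ & Hpos2 & _ & Hint2 & _).
  pose proof HB1 as (_ & HK1 & _). pose proof HB2 as (_ & HK2 & _).
  destruct (Hint1 t ltac:(lra) x Hx) as [pr1 ->].
  destruct (Hint2 t ltac:(lra) x Hx) as [pr2 ->].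
  replace (phi 0 x + RiemannInt pr1 - (phi 0 x + RiemannInt pr2))
    with (RiemannInt pr1 - RiemannInt pr2) by ring.
  apply RiemannInt_diff_tail_bound; [lra | lra | repeat apply Rmult_le_pos; lra | |].
  - intros s Hs HsT.
    apply (F_lipschitz_on_eq F M L); try exact HL; try exact Hx;
      try (apply (solution_args_in_ball K M); auto; lra).
    + intros y Hy. apply HA; auto.
    + intros y Hy. apply Htau; auto; lra.
    + intros x' y Hx' Hy. rewrite Htau by (auto; lra).
      pose proof (proj2 (Hpos2 s ltac:(lra)) x' Hx'). apply HA; auto; lra.
  - intros s Hs HsT.
    assert (Hw : nle2 Omega (fsub2 (delayed A1 tau1 s) (delayed A2 tau2 s)) (Lam * D + D)).
    { intros x' y Hx' Hy. unfold fsub2, delayed.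
      pose proof (proj2 (Hpos1 s ltac:(lra)) x' Hx'). pose proof (proj2 (Hpos2 s ltac:(lra)) x' Hx').
      pose proof (HK1 s ltac:(lra) x' Hx'). pose proof (HK2 s ltac:(lra) x' Hx').
      replace (A1 (s - tau1 s x') y - A2 (s - tau2 s x') y) with
        ((A1 (s - tau1 s x') y - A1 (s - tau2 s x') y)
         + (A1 (s - tau2 s x') y - A2 (s - tau2 s x') y)) by ring.
      eapply Rle_trans; [apply Rabs_triang|]. apply Rplus_le_compat.
      - eapply Rle_trans; [apply HLam; auto; lra|]. apply Rmult_le_compat_l; auto.
        replace (s - tau1 s x' - (s - tau2 s x')) with (- (tau1 s x' - tau2 s x')) by ring.
        rewrite Rabs_Ropp. apply Hgap; auto; lra.
      - apply (A_gap_le_before T t); auto; lra. }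
    assert (Hdiff := F_lipschitz_on_ball F M L _ _ _ _ _ _ HL
      (solution_args_in_ball K M A1 tau1 H1 HB1 s ltac:(lra))
      (solution_args_in_ball K M A2 tau2 H2 HB2 s ltac:(lra)) D D (Lam * D + D)).
    eapply Rle_trans; [apply Hdiff; auto|]; [| | right; ring].
    + intros y Hy. apply Hgap; auto; lra.
    + intros y Hy. apply Hgap; auto; lra.
Qed.

Lemma delay_gap_le (T t D : R) (x : pt n) : agree_before T -> gap_le T t D -> 0 <= D ->
  0 <= T <= t -> t <= r -> Omega x ->
  Rabs (tau1 t x - tau2 t x) <= Lf / m * D * (t - T).
Proof.
  intros [HA _] Hgap HD HTt Htr Hx.
  pose proof HB1 as (HK0 & HK1 & _). pose proof HB2 as (_ & HK2 & _).
  assert (Hf : forall A tau, is_solution Omega F f phi tau0 r A tau ->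
            bounded_solution K M A tau ->
            forall s, -K <= s <= r -> forall x, Omega x -> m <= f (A s) x).
  { intros A tau Hsol (_ & _ & HMA & _) s Hs y Hy.
    apply Hm; auto. apply (proj1 (proj1 Hsol)); lra. }
  assert (Hm_gap : m * Rabs (tau1 t x - tau2 t x) <= Lf * D * (t - T)).
  { destruct (Rle_or_lt (tau2 t x) (tau1 t x)).
    - rewrite Rabs_right by lra.
      apply (delay_gap_one_sided A1 tau1 A2 tau2 Lf K); auto.
      + apply Hf with (tau := tau1); auto.
      + intros s Hs y Hy. apply Hgap; auto.
    - rewrite Rabs_minus_sym, Rabs_right by lra.
      apply (delay_gap_one_sided A2 tau2 A1 tau1 Lf K); auto; try lra.
      + apply Hf with (tau := tau2); auto.
      + intros s Hs y Hy. symmetry; apply HA; auto.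
      + intros s Hs y Hy. rewrite Rabs_minus_sym. apply Hgap; auto. }
  apply (Rmult_le_reg_l m); auto.
  replace (m * (Lf / m * D * (t - T))) with (Lf * D * (t - T)) by (field; lra). auto.
Qed.

Definition step : R := / (2 * (1 + L * (3 + Lam) + Lf / m)).

Lemma step_contracts : 0 < step /\ L * (3 + Lam) * step <= / 2 /\ Lf / m * step <= / 2.
Proof.
  assert (Hc1 : 0 <= L * (3 + Lam)) by (apply Rmult_le_pos; lra).
  assert (Hc2 : 0 <= Lf / m) by (apply Rmult_le_pos; [lra | left; apply Rinv_0_lt_compat; lra]).
  unfold step. set (S := 2 * (1 + L * (3 + Lam) + Lf / m)).
  assert (HS : 0 < S) by (unfold S; lra).
  pose proof (Rinv_0_lt_compat _ HS). pose proof (Rinv_r S ltac:(lra)).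
  unfold S in *. repeat split; nra.
Qed.

Lemma gap_halves (T t D : R) : agree_before T -> 0 <= T <= t -> t <= r -> t <= T + step ->
  0 <= D -> gap_le T t D -> gap_le T t (D / 2).
Proof.
  intros Hag HTt Htr Hstep HD Hgap s Hs y Hy.
  assert (Hgap_s : gap_le T s D) by (intros s' Hs'; apply Hgap; lra).
  destruct step_contracts as (_ & Hc1 & Hc2).
  assert (Hshort : forall c, 0 <= c -> c * step <= / 2 -> c * D * (s - T) <= D / 2).
  { intros c Hc Hcs. assert (c * (s - T) <= / 2) by nra. nra. }
  split.
  - eapply Rle_trans; [apply (A_gap_le T s D y); auto; lra|].
    apply Hshort; auto. apply Rmult_le_pos; lra.
  - eapply Rle_trans; [apply (delay_gap_le T s D y); auto; lra|].
    apply Hshort; auto. apply Rmult_le_pos; [lra | left; apply Rinv_0_lt_compat; lra].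
Qed.

Lemma agree_after (T : R) : 0 <= T <= r -> agree_before T ->
  forall s, T <= s < T + step -> s <= r -> forall x, Omega x ->
    A1 s x = A2 s x /\ tau1 s x = tau2 s x.
Proof.
  intros HT Hag s Hs Hsr x Hx.
  pose proof HB1 as (HK0 & _ & HMA1 & HMt1). pose proof HB2 as (_ & _ & HMA2 & HMt2).
  assert (Hgap : forall k, gap_le T s (2 * M / 2 ^ k)).
  { induction k as [|k IH].
    - rewrite pow_O, Rdiv_1_r. intros s' Hs' y Hy.
      assert (Hdiff : forall a b, Rabs a <= M -> Rabs b <= M -> Rabs (a - b) <= 2 * M).
      { intros a b Ha Hb. apply Rabs_le_inv in Ha, Hb. apply Rabs_le. lra. }
      split; apply Hdiff; [apply HMA1 | apply HMA2 | apply HMt1 | apply HMt2]; auto; lra.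
    - replace (2 * M / 2 ^ S k) with (2 * M / 2 ^ k / 2)
        by (simpl; field; apply pow_nonzero; lra).
      apply gap_halves; auto; try lra.
      apply Rmult_le_pos; [lra | left; apply Rinv_0_lt_compat, pow_lt; lra]. }
  split; apply Rminus_diag_uniq, (halving_zero _ (2 * M)); try lra;
    intro k; apply (Hgap k s); auto; lra.
Qed.

Lemma solutions_agree : 0 <= r ->
  (forall t, t <= r -> forall x, Omega x -> A1 t x = A2 t x) /\
  (forall t, 0 <= t <= r -> forall x, Omega x -> tau1 t x = tau2 t x).
Proof.
  intro Hr.
  pose proof H1 as (_ & _ & _ & Hinit1 & _). pose proof H2 as (_ & _ & _ & Hinit2 & _).
  assert (Hhist : forall t, t <= 0 -> forall x, Omega x -> A1 t x = A2 t x)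
    by (intros t Ht x Hx; rewrite Hinit1, Hinit2; auto).
  assert (Hmain : forall s, 0 <= s <= r -> forall x, Omega x ->
                    A1 s x = A2 s x /\ tau1 s x = tau2 s x).
  { apply (real_interval_ind 0 r
      (fun s => forall x, Omega x -> A1 s x = A2 s x /\ tau1 s x = tau2 s x)); auto.
    intros T HT IH.
    exists step. split; [apply step_contracts|]. intros s Hs HsT.
    apply (agree_after T); try lra. split; intros s' Hs' y Hy.
    - destruct (Rle_or_lt s' 0); [apply Hhist; auto | apply (IH s'); auto; lra].
    - apply (IH s'); auto. }
  split; intros t Ht x Hx.
  - destruct (Rle_or_lt t 0); [apply Hhist; auto | apply Hmain; auto; lra].
  - apply Hmain; auto.
Qed.

End Two_solutions.
End Delay_system.

Theorem lemma4p3 (n : nat) (Omega : subset n) (alpha : R) (F : Fop n)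
    (f : (pt n -> R) -> (pt n -> R)) (Mf : R)
    (HOmega : compact_set Omega) (Halpha : 0 <= alpha)
    (HF : F_assumption Omega F) (Hf : f_assumption Omega f Mf)
    (M0 : R) (HM0 : 0 < M0) (phi : R -> pt n -> R) (tau0 : pt n -> R)
    (Hnorm : exists a b c, Lip_alpha_bounds Omega alpha phi a b /\
               Cplus Omega tau0 /\ nle Omega tau0 c /\ a + b + c <= M0)
    (r : R) (Hr : 0 < r)
    (A1 tau1 A2 tau2 : R -> pt n -> R)
    (H1 : is_solution Omega F f phi tau0 r A1 tau1)
    (H2 : is_solution Omega F f phi tau0 r A2 tau2) :
  (forall t, t <= r -> forall x, Omega x -> A1 t x = A2 t x) /\
  (forall t, 0 <= t <= r -> forall x, Omega x -> tau1 t x = tau2 t x).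
Proof.
  destruct Hnorm as (a & b & _ & Hphi & _).
  destruct (two_solutions_bounded n Omega F f phi tau0 r A1 tau1 A2 tau2 HOmega
              ltac:(lra) H1 H2) as (K & M & HM & HB1 & HB2).
  destruct (F_assumption_lipschitz n Omega F HF M HM) as (L & HL0 & HL).
  destruct (f_assumption_lipschitz n Omega f Mf Hf) as (Lf & HLf0 & HLf).
  destruct (f_lower_bound n Omega f Mf M HOmega Hf) as (m & Hm0 & Hm).
  destruct (solution_integrand_bounded n Omega F f phi tau0 r K M L A1 tau1
              HOmega HF H1 HB1 ltac:(lra) HL0 HL) as (C & HC0 & HC).
  destruct (Lip_alpha_lipschitz_on Omega alpha phi a b K Halpha Hphi (proj1 HB1))
    as (Lp & HLp0 & HLp).
  apply (solutions_agree n Omega F f phi tau0 r A1 tau1 A2 tau2 K M L Lf (C + Lp) m);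
    auto; try lra.
  apply (solution_lipschitz n Omega F f phi tau0 r A1 tau1 C Lp K); auto.
  apply (solution_lipschitz_on_0_r n Omega F f phi tau0 r A1 tau1 C); auto.
Qed.
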